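(* Suppose $\tau_f\in(\tau_c,+\infty)$. Then $$p'(\tau)<\frac{2h(\tau)-2h(\tau_f)}{\tau^2-\tau_f^2}<p'(\tau_f)\quad\text{for }\tau\in(1,\tau_f).$$ Moreover, for any $\tau_b\in(1,\tau_f)$ Liu's extended entropy condition holds: $$\frac{2h(\tau_f)-2h(\tau_b)}{\tau_f^2-\tau_b^2}<\frac{2h(\tau_f)-2h(\tau)}{\tau_f^2-\tau^2}\quad\text{for all }\tau\in(\tau_b,\tau_f).$$
   Context: The pressure is $p(\tau)=\frac{\mathcal S}{(\tau-1)^\gamma}-\frac{1}{\tau^2}$ for $\tau>1$, with constants $1<\gamma<2$, $\mathcal S>0$, assumed such that there exist $1<\tau_1^i<\tau_2^i$ with $p'<0$ on $(1,\infty)$, $p''>0$ on $(1,\tau_1^i)\cup(\tau_2^i,\infty)$, $p''<0$ on $(\tau_1^i,\tau_2^i)$. The function $h$ satisfies $h'(\tau)=\tau p'(\tau)$. $\tau_c$ denotes the unique $\tau_c\in(\tau_1^i,\infty)$ with $p'(\tau_1^i)=\frac{2h(\tau_c)-2h(\tau_1^i)}{\tau_c^2-(\tau_1^i)^2}$. *)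

From Stdlib Require Import Reals.
From Coquelicot Require Import Coquelicot.
Open Scope R_scope.

Definition pres (S gamma : R) (tau : R) : R :=
  S / Rpower (tau - 1) gamma - 1 / tau ^ 2.

Definition dpres (S gamma : R) : R -> R := Derive (pres S gamma).
Definition ddpres (S gamma : R) : R -> R := Derive (dpres S gamma).

Definition chord (h : R -> R) (a b : R) : R :=
  (2 * h a - 2 * h b) / (a ^ 2 - b ^ 2).

From Stdlib Require Import Reals Lra.
From Coquelicot Require Import Coquelicot.
Open Scope R_scope.

(* Write f = p'.  Since h' = tau f(tau), the mean value theorem applied to
   2h - k tau^2 shows that the chord slope (2h(b) - 2h(a))/(b^2 - a^2) equals
   f(xi) for some xi in (a, b); moreover the slope over [a, c] is a weighted
   mean of the slopes over [a, b] and [b, c].  The sign pattern of p'' makes f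
   increase on (1, tau1], decrease on [tau1, tau2] and increase on [tau2, oo).
   If f(tauc) <= f(tau1), the slope over [tau1, tauc] would be < f(tau1),
   contradicting the definition of tauc; so f(tauc) > f(tau1) and tauc > tau2.
   For tauf > tauc the slope over [tau1, tauf] then exceeds f(tau1), and a case
   split on the position of tau shows that the slope over [tau, tauf] exceeds
   f(tau); it stays below f(tauf) because f < f(tauf) on (1, tauf).  Finally the
   derivative in tau of the slope over [tau, tauf] is
   2 tau (slope - f(tau)) / (tauf^2 - tau^2) > 0, which is Liu's condition. *)

Lemma incr_on_segment (g dg : R -> R) (a b : R) : a < b ->
  (forall c, a <= c <= b -> is_derive g c (dg c)) ->
  (forall c, a < c < b -> 0 < dg c) -> g a < g b.
Proof.
  intros Hab Hd Hpos.
  destruct (MVT_cor2 g dg a b Hab) as [c [Hgc Hc]].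
  - intros c Hc. apply is_derive_Reals, Hd, Hc.
  - specialize (Hpos c Hc). nra.
Qed.

Lemma decr_on_segment (g dg : R -> R) (a b : R) : a < b ->
  (forall c, a <= c <= b -> is_derive g c (dg c)) ->
  (forall c, a < c < b -> dg c < 0) -> g b < g a.
Proof.
  intros Hab Hd Hneg.
  enough (- g a < - g b) by lra.
  apply (incr_on_segment (fun y => - g y) (fun y => - dg y)); auto.
  - intros c Hc. apply (is_derive_opp g), Hd, Hc.
  - intros c Hc. specialize (Hneg c Hc). lra.
Qed.

Lemma chord_sym (h : R -> R) (a b : R) : chord h a b = chord h b a.
Proof.
  unfold chord.
  destruct (Req_dec (a ^ 2 - b ^ 2) 0) as [Hab | Hab].
  - replace (b ^ 2 - a ^ 2) with 0 by lra. rewrite Hab.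
    unfold Rdiv. now rewrite Rinv_0, !Rmult_0_r.
  - field. split; lra.
Qed.

Lemma chord_split (h : R -> R) (a b c : R) : 0 <= a < b -> b < c ->
  (c ^ 2 - a ^ 2) * chord h c a
  = (c ^ 2 - b ^ 2) * chord h c b + (b ^ 2 - a ^ 2) * chord h b a.
Proof. intros Hab Hbc. unfold chord. field. repeat split; nra. Qed.

Lemma chord_gt_split (h : R -> R) (k a b c : R) : 0 <= a < b -> b < c ->
  k <= chord h b a -> k < chord h c b -> k < chord h c a.
Proof.
  intros Hab Hbc Hba Hcb.
  pose proof (chord_split h a b c Hab Hbc) as Hsplit.
  assert (0 < c ^ 2 - b ^ 2) by nra.
  assert (0 <= b ^ 2 - a ^ 2) by nra.
  nra.
Qed.

Lemma chord_lt_chord_right (h : R -> R) (a b c : R) : 0 <= a < b -> b < c ->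
  chord h b a < chord h c a -> chord h c a < chord h c b.
Proof.
  intros Hab Hbc Hlt.
  pose proof (chord_split h a b c Hab Hbc) as Hsplit.
  assert (0 < c ^ 2 - b ^ 2) by nra.
  assert (0 < b ^ 2 - a ^ 2) by nra.
  nra.
Qed.

Section ChordOfDerivative.

Variables (h f : R -> R).

Lemma is_derive_tilted (k c : R) : is_derive h c (c * f c) ->
  is_derive (fun y => 2 * h y - k * y ^ 2) c (2 * c * (f c - k)).
Proof.
  intros Hc.
  assert (HD : Derive (fun y => h y) c = c * f c) by now apply is_derive_unique.
  auto_derive.
  - now exists (c * f c).
  - rewrite HD. ring.
Qed.

Lemma chord_mean_value (a b : R) : 0 <= a < b ->
  (forall c, a <= c <= b -> is_derive h c (c * f c)) ->
  exists xi, a < xi < b /\ chord h b a = f xi.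
Proof.
  intros Hab Hh.
  set (k := chord h b a).
  assert (Hlevel : 2 * h b - k * b ^ 2 = 2 * h a - k * a ^ 2).
  { unfold k, chord. field. nra. }
  destruct (MVT_cor2 (fun y => 2 * h y - k * y ^ 2) (fun c => 2 * c * (f c - k)) a b)
    as [xi [Hxi Hrange]]; [lra | | ].
  - intros c Hc. apply is_derive_Reals, is_derive_tilted, Hh, Hc.
  - exists xi. split; [exact Hrange |].
    assert (Hprod : (2 * xi * (b - a)) * (f xi - k) = 0) by lra.
    apply Rmult_integral in Hprod as [Hz | Hz]; [nra | lra].
Qed.

Lemma chord_gt_of_f_gt (k a b : R) : 0 <= a < b ->
  (forall c, a <= c <= b -> is_derive h c (c * f c)) ->
  (forall c, a < c < b -> k < f c) -> k < chord h b a.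
Proof.
  intros Hab Hh Hf.
  destruct (chord_mean_value a b Hab Hh) as [xi [Hxi ->]]. now apply Hf.
Qed.

Lemma chord_lt_of_f_lt (k a b : R) : 0 <= a < b ->
  (forall c, a <= c <= b -> is_derive h c (c * f c)) ->
  (forall c, a < c < b -> f c < k) -> chord h b a < k.
Proof.
  intros Hab Hh Hf.
  destruct (chord_mean_value a b Hab Hh) as [xi [Hxi ->]]. now apply Hf.
Qed.

Lemma is_derive_chord_snd (F c : R) : 0 < c < F -> is_derive h c (c * f c) ->
  is_derive (chord h F) c (2 * c * (chord h F c - f c) / (F ^ 2 - c ^ 2)).
Proof.
  intros Hc Hh.
  assert (HD : Derive (fun y => h y) c = c * f c) by now apply is_derive_unique.
  assert (Hpos : 0 < F ^ 2 - c ^ 2) by nra.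
  unfold chord. auto_derive.
  - repeat split; [now exists (c * f c) | simpl in Hpos; lra].
  - rewrite HD. field. simpl in Hpos; lra.
Qed.

Lemma chord_snd_incr (F b x : R) : 0 < b < x -> x < F ->
  (forall c, b <= c <= x -> is_derive h c (c * f c)) ->
  (forall c, b < c < x -> f c < chord h F c) -> chord h F b < chord h F x.
Proof.
  intros Hbx HxF Hh Hf.
  apply (incr_on_segment _ (fun c => 2 * c * (chord h F c - f c) / (F ^ 2 - c ^ 2))).
  - lra.
  - intros c Hc. apply is_derive_chord_snd; [lra | now apply Hh].
  - intros c Hc. specialize (Hf c Hc).
    assert (0 < F ^ 2 - c ^ 2) by nra.
    apply Rdiv_lt_0_compat; nra.
Qed.

End ChordOfDerivative.

Section PiecewiseMonotoneSlope.

Variables (f df h : R -> R) (tau1 tau2 tauc : R).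

Hypothesis Htau : 1 < tau1 < tau2.
Hypothesis Hdf : forall t, 1 < t -> is_derive f t (df t).
Hypothesis Hdf_left : forall t, 1 < t < tau1 -> 0 < df t.
Hypothesis Hdf_mid : forall t, tau1 < t < tau2 -> df t < 0.
Hypothesis Hdf_right : forall t, tau2 < t -> 0 < df t.
Hypothesis Hh : forall t, 1 < t -> is_derive h t (t * f t).
Hypothesis Htauc : tau1 < tauc.
Hypothesis Hchord_tauc : f tau1 = chord h tauc tau1.

Let Hh_on (a b : R) : 1 < a -> forall c, a <= c <= b -> is_derive h c (c * f c).
Proof. intros Ha c Hc. apply Hh. lra. Qed.

Lemma f_incr_left (a b : R) : 1 < a -> a < b -> b <= tau1 -> f a < f b.
Proof.
  intros Ha Hab Hb. apply (incr_on_segment f df); auto.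
  - intros c Hc. apply Hdf. lra.
  - intros c Hc. apply Hdf_left. lra.
Qed.

Lemma f_decr_mid (a b : R) : tau1 <= a -> a < b -> b <= tau2 -> f b < f a.
Proof.
  intros Ha Hab Hb. apply (decr_on_segment f df); auto.
  - intros c Hc. apply Hdf. lra.
  - intros c Hc. apply Hdf_mid. lra.
Qed.

Lemma f_incr_right (a b : R) : tau2 <= a -> a < b -> f a < f b.
Proof.
  intros Ha Hab. apply (incr_on_segment f df); auto.
  - intros c Hc. apply Hdf. lra.
  - intros c Hc. apply Hdf_right. lra.
Qed.

Lemma f_tau1_lt_f_tauc : f tau1 < f tauc.
Proof.
  destruct (Rlt_or_le (f tau1) (f tauc)) as [Hlt | Hge]; [exact Hlt | exfalso].
  enough (chord h tauc tau1 < f tau1) by lra.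
  apply (chord_lt_of_f_lt h f); [lra | apply Hh_on; lra |].
  intros c Hc. destruct (Rle_or_lt c tau2).
  - apply f_decr_mid; lra.
  - enough (f c < f tauc) by lra. apply f_incr_right; lra.
Qed.

Lemma tau2_lt_tauc : tau2 < tauc.
Proof.
  destruct (Rle_or_lt tauc tau2) as [Hle | Hlt]; [exfalso | exact Hlt].
  pose proof f_tau1_lt_f_tauc. enough (f tauc < f tau1) by lra.
  apply f_decr_mid; lra.
Qed.

Variable tauf : R.
Hypothesis Htauf : tauc < tauf.

Lemma f_lt_f_tauf (t : R) : 1 < t < tauf -> f t < f tauf.
Proof.
  intros Ht. pose proof f_tau1_lt_f_tauc. pose proof tau2_lt_tauc.
  assert (f tauc < f tauf) by (apply f_incr_right; lra).
  destruct (Rlt_or_le t tau1) as [Ht1 | Ht1].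
  - enough (f t < f tau1) by lra. apply f_incr_left; lra.
  - destruct (Rle_or_lt t tau2) as [Ht2 | Ht2].
    + destruct (Req_dec t tau1) as [-> | Hne]; [lra |].
      enough (f t < f tau1) by lra. apply f_decr_mid; lra.
    + apply f_incr_right; lra.
Qed.

Lemma f_tau1_lt_chord : f tau1 < chord h tauf tau1.
Proof.
  pose proof f_tau1_lt_f_tauc. pose proof tau2_lt_tauc.
  apply (chord_gt_split h _ tau1 tauc tauf); [lra | lra | lra |].
  apply (chord_gt_of_f_gt h f); [lra | apply Hh_on; lra |].
  intros c Hc. enough (f tauc < f c) by lra. apply f_incr_right; lra.
Qed.

Lemma f_lt_chord (t : R) : 1 < t < tauf -> f t < chord h tauf t.
Proof.
  intros Ht. pose proof f_tau1_lt_chord. pose proof tau2_lt_tauc.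
  destruct (Rle_or_lt tau2 t) as [Ht2 | Ht2].
  - apply (chord_gt_of_f_gt h f); [lra | apply Hh_on; lra |].
    intros c Hc. apply f_incr_right; lra.
  - destruct (Rtotal_order t tau1) as [Ht1 | [-> | Ht1]]; [| exact f_tau1_lt_chord |].
    + assert (f t < f tau1) by (apply f_incr_left; lra).
      apply (chord_gt_split h _ t tau1 tauf); [lra | lra | | lra].
      apply Rlt_le, (chord_gt_of_f_gt h f); [lra | apply Hh_on; lra |].
      intros c Hc. apply f_incr_left; lra.
    + assert (f t < f tau1) by (apply f_decr_mid; lra).
      assert (chord h t tau1 < f tau1).
      { apply (chord_lt_of_f_lt h f); [lra | apply Hh_on; lra |].
        intros c Hc. apply f_decr_mid; lra. }
      enough (chord h tauf tau1 < chord h tauf t) by lra.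
      apply chord_lt_chord_right; lra.
Qed.

Lemma chord_lt_f_tauf (t : R) : 1 < t < tauf -> chord h tauf t < f tauf.
Proof.
  intros Ht. apply (chord_lt_of_f_lt h f); [lra | apply Hh_on; lra |].
  intros c Hc. apply f_lt_f_tauf. lra.
Qed.

End PiecewiseMonotoneSlope.

Definition dpres_expr (S gamma y : R) : R :=
  - (S * gamma) / ((y - 1) * Rpower (y - 1) gamma) + 2 / y ^ 3.

Lemma is_derive_pres (S gamma y : R) : 1 < y ->
  is_derive (pres S gamma) y (dpres_expr S gamma y).
Proof.
  intros Hy. unfold pres, dpres_expr, Rpower.
  assert (Hexp : exp (gamma * ln (y - 1)) <> 0) by apply Rgt_not_eq, exp_pos.
  replace (y - 1) with (y + - (1)) in * by ring.
  auto_derive.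
  - repeat split; try lra; auto. apply Rgt_not_eq. nra.
  - field. repeat split; try lra; auto.
Qed.

Lemma is_derive_dpres (S gamma t : R) : 1 < t ->
  is_derive (dpres S gamma) t (ddpres S gamma t).
Proof.
  intros Ht. apply Derive_correct.
  apply (ex_derive_ext_loc (dpres_expr S gamma)).
  - apply (locally_interval _ t 1 p_infty); [exact Ht | exact I |].
    intros y Hy _. symmetry. apply is_derive_unique, is_derive_pres, Hy.
  - unfold dpres_expr, Rpower. auto_derive.
    repeat split; try lra.
    + apply Rgt_not_eq, Rmult_lt_0_compat; [lra | apply exp_pos].
    + apply Rgt_not_eq. nra.
Qed.

Theorem proposition3p2
  (S gamma : R) (h : R -> R) (tau1 tau2 tauc : R)
  (Hgamma : 1 < gamma < 2) (HS : 0 < S)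
  (Htau : 1 < tau1 < tau2)
  (Hdp : forall t, 1 < t -> dpres S gamma t < 0)
  (Hddp1 : forall t, 1 < t < tau1 -> 0 < ddpres S gamma t)
  (Hddp2 : forall t, tau2 < t -> 0 < ddpres S gamma t)
  (Hddp3 : forall t, tau1 < t < tau2 -> ddpres S gamma t < 0)
  (Hh : forall t, 1 < t -> is_derive h t (t * dpres S gamma t))
  (Htauc : tau1 < tauc /\ dpres S gamma tau1 = chord h tauc tau1)
  (Htauc_uniq : forall t, tau1 < t -> dpres S gamma tau1 = chord h t tau1 -> t = tauc) :
  forall tauf, tauc < tauf ->
    (forall tau, 1 < tau < tauf ->
       dpres S gamma tau < chord h tau tauf /\ chord h tau tauf < dpres S gamma tauf) /\
    (forall taub, 1 < taub < tauf ->
       forall tau, taub < tau < tauf -> chord h tauf taub < chord h tauf tau).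
Proof.
  intros tauf Htauf. destruct Htauc as [Htc Hchord_tauc].
  pose proof (is_derive_dpres S gamma) as Hdf.
  pose proof (f_lt_chord _ _ _ _ _ _ Htau Hdf Hddp1 Hddp3 Hddp2 Hh Htc Hchord_tauc
                tauf Htauf) as Hbelow.
  pose proof (chord_lt_f_tauf _ _ _ _ _ _ Htau Hdf Hddp1 Hddp3 Hddp2 Hh Htc Hchord_tauc
                tauf Htauf) as Habove.
  split.
  - intros tau Htau_f. rewrite chord_sym. auto.
  - intros taub Htaub tau Htau_b.
    apply (chord_snd_incr h (dpres S gamma)); [lra | lra | |].
    + intros c Hc. apply Hh. lra.
    + intros c Hc. apply Hbelow. lra.
Qed.
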